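(* Let $H$, $L$ be as in the context and let $(S,\mathcal T_0)$ be a feasible solution, with associated layers $\mathcal T_0,\dots,\mathcal T_{L-1}$. Let $k$ be an integer with $1\le k\le L-1$, and let $H^{(S,k)}=H+\phi^{S}(H)+\phi^{2S}(H)+\cdots+\phi^{(k-1)S}(H)$ (sum of integer matrices). Then $d(S,\mathcal T_0)\ge k$ if and only if $H^{(S,k)}_{\mathcal T_0}$ is a binary matrix (all entries in $\{0,1\}$) and $\omega\big(H^{(S,k)}_{\mathcal T_0}\big)=1$.
   Context: Notation: for a nonnegative integer $n$, $[n)=\{0,1,\dots,n-1\}$. Let $M,N,Z$ be positive integers and let $H$ be a binary $MZ\times NZ$ matrix made of $M\times N$ blocks $H_{m,n}$ ($m\in[M)$, $n\in[N)$), each of which is a $Z\times Z$ circulant (row $i$ of the block is the cyclic right shift by $i$ of its row $0$). Assume $H$ has no zero row and no two identical rows. Rows of $H$ are indexed by $[MZ)$, columns by $[NZ)$. For a vector $x=(x_0,\dots,x_{Z-1})$ and an integer $s$, $\lambda^s(x)=(x_{(-s)\bmod Z},x_{(1-s)\bmod Z},\dots,x_{(Z-1-s)\bmod Z})$. For a row vector $y$ of length $NZ$ split into $N$ consecutive pieces $y^{(0)},\dots,y^{(N-1)}$ of length $Z$, $\phi^s(y)=(\lambda^s(y^{(0)}),\dots,\lambda^s(y^{(N-1)}))$; for a matrix $A$ with $NZ$ columns, $\phi^s(A)$ applies $\phi^s$ to every row. For an ordered subset $\mathcal A\subseteq[MZ)$, $A_{\mathcal A}$ denotes the matrix formed, in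 order, by the rows of a matrix $A$ with indices in $\mathcal A$. For a matrix $A$, $\omega_j(A)$ is the Hamming weight of column $j$ and $\omega(A)=\max_j\omega_j(A)$ (with $\omega$ of the empty matrix equal to $0$). Fix an integer $L>1$. A feasible solution is a pair $(S,\mathcal T_0)$ with $S$ a positive integer and $\mathcal T_0$ an ordered subset of $[MZ)$ such that there exist ordered subsets $\mathcal T_1,\dots,\mathcal T_{L-1}$ of $[MZ)$ with $\mathcal T_0,\dots,\mathcal T_{L-1}$ pairwise disjoint, $\bigcup_{l\in[L)}\mathcal T_l=[MZ)$, and $H_{\mathcal T_l}=\phi^{lS}(H_{\mathcal T_0})$ for all $l\in[L)$. The layer distance $d(S,\mathcal T_0)$ is the largest $l\in[L)$ such that the matrix obtained by stacking $H_{\mathcal T_0},H_{\mathcal T_1},\dots,H_{\mathcal T_{l-1}}$ vertically has maximum column weight at most $1$ (for $l=0$ the stack is empty with weight $0$). *)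

From mathcomp Require Import all_boot all_order all_algebra.
Set Implicit Arguments. Unset Strict Implicit. Unset Printing Implicit Defensive.
Import GRing.Theory Num.Theory.
Local Open Scope ring_scope.

Definition binary_mx (m n : nat) (A : 'M[int]_(m, n)) : Prop :=
  forall i j, A i j = 0 \/ A i j = 1.

(* H (of size MZ x NZ) is made of M x N blocks of size Z x Z, each circulant:
   row r of block (m,n) is the cyclic right shift by r of row 0 of that block,
   i.e. entry (r, c) of the block equals entry (0, (c - r) mod Z). *)
Definition circulant_blocks (M N Z : nat) (H : 'M[int]_(M * Z, N * Z)) : Prop :=
  forall (i : 'I_(M * Z)) (j : 'I_(N * Z)),
    H i j = H (insubd i ((i %/ Z) * Z)%N)
              (insubd j ((j %/ Z) * Z + (j %% Z + Z - i %% Z) %% Z)%N).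

Definition shift_col (N Z s : nat) (j : 'I_(N * Z)) : 'I_(N * Z) :=
  insubd j ((j %/ Z) * Z + (j %% Z + Z - s %% Z) %% Z)%N.

Definition phi (N Z s : nat) (m : nat) (A : 'M[int]_(m, N * Z)) : 'M[int]_(m, N * Z) :=
  \matrix_(i < m, j < N * Z) A i (@shift_col N Z s j).

Definition subrows (m n : nat) (A : 'M[int]_(m, n)) (T : seq 'I_m) : 'M[int]_(size T, n) :=
  rowsub (fun i : 'I_(size T) => tnth (in_tuple T) i) A.

(* Hamming weight of column j, and maximal column weight (0 for no columns). *)
Definition col_weight (m n : nat) (A : 'M[int]_(m, n)) (j : 'I_n) : nat :=
  #|[set i : 'I_m | A i j != 0]|.

Definition omega (m n : nat) (A : 'M[int]_(m, n)) : nat :=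
  (\max_(j < n) col_weight A j)%N.

Definition layers (M N Z L S : nat) (H : 'M[int]_(M * Z, N * Z))
    (Ts : seq (seq 'I_(M * Z))) : Prop :=
  [/\ size Ts = L,
      (forall l, (l < L)%N -> uniq (nth [::] Ts l)),
      (forall l l', (l < L)%N -> (l' < L)%N -> l != l' ->
          forall x, x \in nth [::] Ts l -> x \notin nth [::] Ts l'),
      (forall x : 'I_(M * Z), exists2 l, (l < L)%N & x \in nth [::] Ts l) &
      (forall l, (l < L)%N ->
         exists e : size (nth [::] Ts l) = size (nth [::] Ts 0),
           castmx (e, erefl) (subrows H (nth [::] Ts l))
           = @phi N Z (l * S) _ (subrows H (nth [::] Ts 0)))].

(* layer distance: largest l in [L) such that stacking H_{T_0},...,H_{T_{l-1}}
   has maximum column weight at most 1 (l = 0 always qualifies). *)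
Definition layer_distance (M N Z L : nat) (H : 'M[int]_(M * Z, N * Z))
    (Ts : seq (seq 'I_(M * Z))) : nat :=
  (\max_(l < L | (omega (subrows H (flatten (take l Ts))) <= 1)%N) (l : nat))%N.

Definition Hsum (M N Z S k : nat) (H : 'M[int]_(M * Z, N * Z)) : 'M[int]_(M * Z, N * Z) :=
  \sum_(l < k) @phi N Z (l * S) _ H.

(** Write [B] for the rows of [H] indexed by [T_0]. Since layer [l] is
    [phi^(lS)(B)], the weight of column [j] in the stack of the first [k]
    layers is the number of pairs [(r, l)], [l < k], with
    [B r (shift_(lS) j) = 1]; by binarity of [H] the entry [(r, j)] of
    [H^(S,k)_(T_0)] counts the same pairs with [r] fixed. So the stack has
    column weights at most one exactly when every entry of [H^(S,k)_(T_0)] is at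
    most one and each of its columns has at most one nonzero entry. Stacks only
    grow with the number of layers, so [d >= k] is this condition for the
    [k]-stack; finally [omega >= 1] because [H] has no zero row. *)

From Corelib Require Import Setoid.
From mathcomp Require Import all_boot all_order all_algebra.
Import GRing.Theory.
Local Open Scope ring_scope.

Lemma sum_nat_le1P {I : finType} (f : I -> nat) :
  (\sum_i f i <= 1)%N <-> (forall i, f i <= 1)%N /\ (\sum_i (f i != 0%N) <= 1)%N.
Proof.
split=> [le1 | [f_le1 le1]].
- have f_le1 i : (f i <= 1)%N by apply: leq_trans le1; rewrite (bigD1 i) ?leq_addr.
  split=> //; apply: leq_trans le1; apply: leq_sum => i _; by case: (f i).
- apply: leq_trans le1; apply: leq_sum => i _; by case: (f i) (f_le1 i) => [|[|]].
Qed.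

Lemma col_weightE {m n} (A : 'M[int]_(m, n)) j :
  col_weight A j = (\sum_(i < m) (A i j != 0))%N.
Proof.
by rewrite /col_weight -sum1_card big_mkcond; apply: eq_bigr => i _; rewrite inE.
Qed.

Lemma omega_leP {m n} (A : 'M[int]_(m, n)) b :
  reflect (forall j, col_weight A j <= b)%N (omega A <= b)%N.
Proof. by apply: (iffP (bigmax_leqP _ _ _)) => [le_b j | le_b j _]; apply: le_b. Qed.

Lemma col_weight_subrows {m n} (A : 'M[int]_(m, n)) (T : seq 'I_m) j :
  col_weight (subrows A T) j = count (fun i => A i j != 0) T.
Proof.
rewrite col_weightE -sum1_count big_tnth [RHS]big_mkcond.
by apply: eq_bigr => i _; rewrite mxE; case: (A _ j != 0).
Qed.

Lemma omega_subrows_cat {m n} (A : 'M[int]_(m, n)) (T U : seq 'I_m) :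
  (omega (subrows A T) <= omega (subrows A (T ++ U)))%N.
Proof.
apply/omega_leP => j; apply: leq_trans (leq_bigmax j).
by rewrite !col_weight_subrows count_cat leq_addr.
Qed.

Lemma binary_nat_mx_omega_le1P {m n} (A : 'M[int]_(m, n))
    (f : 'I_m -> 'I_n -> nat) :
  (forall i j, A i j = (f i j)%:Z) ->
  binary_mx A /\ (omega A <= 1)%N <-> (forall j, \sum_i f i j <= 1)%N.
Proof.
move=> Af; have binaryE : binary_mx A <-> forall i j, (f i j <= 1)%N.
  split=> [A01 i j | f_le1 i j]; first by case: (A01 i j); rewrite Af => -[->].
  by rewrite Af; case: (f i j) (f_le1 i j) => [|[|]] // _; [left | right].
have weightE j : col_weight A j = (\sum_i (f i j != 0%N))%N.
  by rewrite col_weightE; apply: eq_bigr => i _; rewrite Af.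
rewrite binaryE; split=> [[f_le1 /omega_leP le1] j | le1].
- by apply/sum_nat_le1P; split=> [i | ]; rewrite ?f_le1 // -weightE.
- split=> [i j | ]; first by have /sum_nat_le1P[] := le1 j.
  by apply/omega_leP => j; rewrite weightE; have /sum_nat_le1P[] := le1 j.
Qed.

Lemma col_weight_castmx {m1 m2 n} (e : m1 = m2) (A : 'M[int]_(m1, n)) j :
  col_weight (castmx (e, erefl n) A) j = col_weight A j.
Proof. by case: m2 / e; rewrite castmx_id. Qed.

Lemma col_weight_phi {N Z} s {m} (A : 'M[int]_(m, N * Z)) j :
  col_weight (phi s A) j = col_weight A (shift_col s j).
Proof. by rewrite !col_weightE; apply: eq_bigr => i _; rewrite mxE. Qed.

Lemma shift_col0 {N Z} (j : 'I_(N * Z)) : shift_col 0 j = j.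
Proof.
apply: val_inj; rewrite /shift_col val_insubd mod0n subn0 modnDr modn_mod.
by rewrite -divn_eq ltn_ord.
Qed.

Lemma count_flatten_take {T : Type} (p : pred T) (Ts : seq (seq T)) k :
  (k <= size Ts)%N ->
  count p (flatten (take k Ts)) = (\sum_(l < k) count p (nth [::] Ts l))%N.
Proof.
elim: k => [|k IHk] le_k; first by rewrite take0 big_ord0.
rewrite (take_nth [::] le_k) flatten_rcons count_cat IHk ?(ltnW le_k) //.
by rewrite big_ord_recr.
Qed.

Section Shifts.

Context {M N Z : nat} (S : nat) {H : 'M[int]_(M * Z, N * Z)}.
Hypothesis H_binary : binary_mx H.

Lemma subrows_HsumE k (T : seq 'I_(M * Z)) r j :
  subrows (Hsum S k H) T r j
  = (\sum_(l < k) (subrows H T r (shift_col (l * S) j) != 0))%N%:Z.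
Proof.
rewrite -natz natr_sum !mxE summxE; apply: eq_bigr => l _; rewrite !mxE.
by case: (H_binary (tnth (in_tuple T) r) (shift_col (l * S) j)) => ->.
Qed.

Lemma omega_subrows_Hsum_gt0 {k} {T : seq 'I_(M * Z)} :
  (forall i, exists j, H i j != 0) -> (0 < size T)%N -> (0 < k)%N ->
  (0 < omega (subrows (Hsum S k H) T))%N.
Proof.
move=> H_rows T_gt0 k_gt0; pose r0 := Ordinal T_gt0.
have [j0 Hr0j0] := H_rows (tnth (in_tuple T) r0).
apply: leq_trans (leq_bigmax j0); rewrite col_weightE (bigD1 r0) //=.
rewrite subrows_HsumE (bigD1 (Ordinal k_gt0)) //= mul0n shift_col0 mxE.
by rewrite Hr0j0.
Qed.

End Shifts.

Section LayerDistance.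

Context {M N Z L : nat} {H : 'M[int]_(M * Z, N * Z)} {Ts : seq (seq 'I_(M * Z))}.

Local Notation stack l := (subrows H (flatten (take l Ts))).

Lemma omega_stack_mono l l' :
  (l <= l')%N -> (omega (stack l) <= omega (stack l'))%N.
Proof.
move=> le_ll'; rewrite -(cat_take_drop l (take l' Ts)) take_takel //.
by rewrite flatten_cat omega_subrows_cat.
Qed.

Lemma layer_distance_geE k : (k < L)%N ->
  (k <= layer_distance L H Ts)%N = (omega (stack k) <= 1)%N.
Proof.
move=> k_ltL; rewrite /layer_distance; apply/idP/idP => [le_k | stack_le1].
- have [|l stack_l_le1 max_l] :=
    @eq_bigmax_cond _ (fun l : 'I_L => omega (stack l) <= 1)%N (@nat_of_ord L).
    apply/card_gt0P; exists (Ordinal (leq_ltn_trans (leq0n k) k_ltL)).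
    by apply/omega_leP => j; rewrite take0 col_weight_subrows.
  by apply: leq_trans stack_l_le1; apply: omega_stack_mono; rewrite -max_l.
- exact: (leq_bigmax_cond (F := fun l : 'I_L => nat_of_ord l) (Ordinal k_ltL)).
Qed.

Context {S : nat}.
Hypothesis Ts_layers : layers L S H Ts.

Local Notation B := (subrows H (nth [::] Ts 0)).

Lemma col_weight_layer l j : (l < L)%N ->
  col_weight (subrows H (nth [::] Ts l)) j = col_weight B (shift_col (l * S) j).
Proof.
case: Ts_layers => _ _ _ _ /(_ l) layer_l /layer_l [e phiB].
by rewrite -(col_weight_castmx e) phiB col_weight_phi.
Qed.

Lemma col_weight_stack k : (k <= L)%N -> forall j,
  col_weight (stack k) j
  = (\sum_r \sum_(l < k) (B r (shift_col (l * S) j) != 0))%N.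
Proof.
case: Ts_layers => size_Ts _ _ _ _ le_kL j.
rewrite col_weight_subrows count_flatten_take ?size_Ts // exchange_big /=.
apply: eq_bigr => l _; rewrite -col_weight_subrows col_weight_layer.
  by rewrite col_weightE.
exact: leq_trans (ltn_ord l) le_kL.
Qed.

Lemma omega_stack_le1P k : (k <= L)%N ->
  (omega (stack k) <= 1)%N
  <-> forall j, (\sum_r \sum_(l < k) (B r (shift_col (l * S) j) != 0) <= 1)%N.
Proof.
move=> le_kL; split=> [/omega_leP stack_le1 j | sums_le1].
  by rewrite -col_weight_stack.
by apply/omega_leP => j; rewrite col_weight_stack.
Qed.

Lemma size_layer0_gt0 : (0 < M * Z)%N -> (0 < size (nth [::] Ts 0))%N.
Proof.
case: Ts_layers => _ _ _ cover layer MZ_gt0.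
have [l l_ltL i_in] := cover (Ordinal MZ_gt0); have [size_l _] := layer l l_ltL.
by rewrite -size_l; case: (nth [::] Ts l) i_in.
Qed.

End LayerDistance.

Theorem theorem1 (M N Z L : nat) (H : 'M[int]_(M * Z, N * Z))
    (S : nat) (T0 : seq 'I_(M * Z)) (Ts : seq (seq 'I_(M * Z))) (k : nat) :
  (0 < M)%N -> (0 < N)%N -> (0 < Z)%N -> (1 < L)%N ->
  binary_mx H ->
  circulant_blocks H ->
  (forall i : 'I_(M * Z), exists j, H i j != 0) ->
  (forall i i' : 'I_(M * Z), row i H = row i' H -> i = i') ->
  (0 < S)%N ->
  nth [::] Ts 0 = T0 ->
  layers L S H Ts ->
  (1 <= k)%N -> (k <= L - 1)%N ->
  (k <= layer_distance L H Ts)%N <->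
  (binary_mx (subrows (Hsum S k H) T0) /\ omega (subrows (Hsum S k H) T0) = 1%N).
Proof.
move=> M_gt0 _ Z_gt0 L_gt1 H_binary _ H_rows _ _ <- Ts_layers k_gt0 k_le.
have k_ltL : (k < L)%N.
  by apply: leq_ltn_trans k_le _; rewrite subn1 ltn_predL ltnW.
have MZ_gt0 : (0 < M * Z)%N by rewrite muln_gt0 M_gt0 Z_gt0.
have omega_gt0 := omega_subrows_Hsum_gt0 S H_binary H_rows
  (size_layer0_gt0 Ts_layers MZ_gt0) k_gt0.
have -> : omega (subrows (Hsum S k H) (nth [::] Ts 0)) = 1%N
          <-> (omega (subrows (Hsum S k H) (nth [::] Ts 0)) <= 1)%N.
  by split=> [-> // | le1]; apply/eqP; rewrite eqn_leq le1.
rewrite layer_distance_geE // (omega_stack_le1P Ts_layers _ (ltnW k_ltL)).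
by rewrite (binary_nat_mx_omega_le1P _ _ (subrows_HsumE S H_binary k _)).
Qed.
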